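(* Let $q\ge1$, $d=2^q$. Let $V_{\{\mathrm A\}}=\mathrm{span}\{A_{\sigma,\tau}:\tau\in\boldsymbol{\sigma}_q,\sigma\in\boldsymbol{N}_\tau\}$, $V_{[\mathrm A]}=\mathrm{span}\{A_{\sigma,\tau}:\tau\in\boldsymbol{\sigma}_q,\sigma\in\boldsymbol{C}_\tau\}$, and $V_{\{\mathrm{adj}\}}=\mathrm{span}\{\frac{1}{\sqrt{2|\boldsymbol{N}_\tau|}}\sum_{\sigma\in\boldsymbol{N}_\tau}A_{\sigma,i\sigma\cdot\tau}:\tau\in\boldsymbol{\sigma}_q\}\subseteq V_{\{\mathrm A\}}$. Let $V^\perp_{\{\mathrm{adj}\}}$ be the orthogonal complement of $V_{\{\mathrm{adj}\}}$ in $V_{\{\mathrm A\}}$ (Hilbert–Schmidt inner product). Then the subrepresentations of $\varphi^{\otimes2}$ carried by $V_{[\mathrm A]}$ and by $V^\perp_{\{\mathrm{adj}\}}$ are equivalent.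
   Context: $\mathcal{M}_d$ is the space of complex $d\times d$ matrices with inner product $\langle A,B\rangle=\mathrm{tr}(A^\dagger B)$ (extended to tensor products). $X,Y,Z$ are the single-qubit Pauli matrices; $\hat{\mathcal{P}}_q$ is the set of $q$-fold tensor products of elements of $\{\mathbb{1},X,Y,Z\}$. $\boldsymbol{\sigma}_q=\{P/\sqrt d:P\in\hat{\mathcal P}_q\setminus\{\mathbb 1\}\}$. The normalized product is $\sigma\cdot\tau=\sqrt d\,\sigma\tau$; for anticommuting $\sigma,\tau\in\boldsymbol\sigma_q$, $i\sigma\cdot\tau$ is $\pm$ an element of $\boldsymbol\sigma_q$. For $\tau\in\boldsymbol{\sigma}_q$: $\boldsymbol{N}_\tau=\{\sigma\in\boldsymbol{\sigma}_q:\sigma\tau+\tau\sigma=0\}$, $\boldsymbol{C}_\tau=\{\sigma\in\boldsymbol{\sigma}_q\setminus\{\tau\}:\sigma\tau=\tau\sigma\}$. $A_{\sigma,\rho}=\frac1{\sqrt2}(\sigma\otimes\rho-\rho\otimes\sigma)$ (bilinear). The Pauli group $\mathcal{P}_q\subset U(2^q)$ consists of all $q$-fold tensor products of elements of the group generated by $X,Z,i\mathbb 1_2$; the Clifford group is $\mathcal{C}_q=\{U\in U(2^q):U\mathcal{P}_qU^\dagger\subseteq\mathcal{P}_q\}/U(1)$. The two-copy representation on $\mathcal{M}_d^{\otimes2}$ is $\varphi^{\otimes2}(C)(A\otimes B)=(CAC^\dagger)\otimes(CBC^\dagger)$, extended linearly; the spaces above are invariant under it. *)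

From HB Require Import structures.
From mathcomp Require Import all_boot all_order all_algebra.
From mathcomp Require Import complex mxtens.
Set Implicit Arguments. Unset Strict Implicit. Unset Printing Implicit Defensive.
Import Order.TTheory GRing.Theory Num.Theory.
Local Open Scope ring_scope.
Local Open Scope complex_scope.

Section Defs.
Variable R : rcfType.
Local Notation C := R[i].

Definition adj {m n} (A : 'M[C]_(m, n)) : 'M[C]_(n, m) := (map_mx conjc A)^T.

(* single-qubit Paulis: 0 -> 1, 1 -> X, 2 -> Y, 3 -> Z *)
Definition pauli1 (a : 'I_4) : 'M[C]_2 :=
  \matrix_(i < 2, j < 2)
    match nat_of_ord a with
    | 0 => if i == j then 1 else 0
    | 1 => if i == j then 0 else 1
    | 2 => if i == j then 0 else (if val i == 0%N then - 'i else 'i)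
    | _ => if i == j then (if val i == 0%N then 1 else -1) else 0
    end.

Fixpoint pstr (s : seq 'I_4) : 'M[C]_(2 ^ size s) :=
  match s return 'M[C]_(2 ^ size s) with
  | [::] => 1%:M
  | a :: s' => castmx (esym (expnS 2 (size s')), esym (expnS 2 (size s')))
                      (pauli1 a *t pstr s')
  end.

Variable q : nat.
Local Notation d := (2 ^ q)%N.

Definition pauli (s : q.-tuple 'I_4) : 'M[C]_d :=
  castmx (congr1 (expn 2) (size_tuple s), congr1 (expn 2) (size_tuple s)) (pstr s).

Definition nonid (s : q.-tuple 'I_4) : bool := ~~ all (pred1 ord0) s.

Definition nsig (s : q.-tuple 'I_4) : 'M[C]_d := (sqrtC (d%:R : C))^-1 *: pauli s.

(* normalized product sigma . tau = sqrt d sigma tau *)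
Definition ndot (A B : 'M[C]_d) : 'M[C]_d := sqrtC (d%:R : C) *: (A *m B).

Definition Nset (t : q.-tuple 'I_4) : {set q.-tuple 'I_4} :=
  [set s | nonid s & nsig s *m nsig t + nsig t *m nsig s == 0].

Definition Cset (t : q.-tuple 'I_4) : {set q.-tuple 'I_4} :=
  [set s | [&& nonid s, s != t & nsig s *m nsig t == nsig t *m nsig s]].

(* A_{sigma,rho} = (sigma (x) rho - rho (x) sigma)/sqrt 2 in M_d (x) M_d = M_{d*d} *)
Definition Amx (A B : 'M[C]_d) : 'M[C]_(d * d) :=
  (sqrtC (2%:R : C))^-1 *: (A *t B - B *t A).

Definition inspan (I : finType) (P : pred I) (g : I -> 'M[C]_(d * d))
  (X : 'M[C]_(d * d)) : bool :=
  (mxvec X <= \sum_(i | P i) <<mxvec (g i)>>)%MS.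

Definition inVA (X : 'M[C]_(d * d)) : bool :=
  inspan (fun p : q.-tuple 'I_4 * q.-tuple 'I_4 => nonid p.2 && (p.1 \in Nset p.2))
         (fun p => Amx (nsig p.1) (nsig p.2)) X.

Definition inVcA (X : 'M[C]_(d * d)) : bool :=
  inspan (fun p : q.-tuple 'I_4 * q.-tuple 'I_4 => nonid p.2 && (p.1 \in Cset p.2))
         (fun p => Amx (nsig p.1) (nsig p.2)) X.

Definition adjgen (t : q.-tuple 'I_4) : 'M[C]_(d * d) :=
  (sqrtC (2%:R * #|Nset t|%:R : C))^-1 *:
    \sum_(s in Nset t) Amx (nsig s) ('i *: ndot (nsig s) (nsig t)).

Definition inVadj (X : 'M[C]_(d * d)) : bool := inspan nonid adjgen X.

Definition hs (A B : 'M[C]_(d * d)) : C := \tr (adj A *m B).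

Definition inVperp (X : 'M[C]_(d * d)) : Prop :=
  inVA X /\ forall Y, inVadj Y -> hs Y X = 0.

(* Pauli group: q-fold tensor products of elements of <X, Z, i 1>,
   i.e. phases i^k times Pauli strings *)
Definition inPauliGroup (P : 'M[C]_d) : Prop :=
  exists (k : 'I_4) (s : q.-tuple 'I_4), P = ('i ^+ k) *: pauli s.

Definition unitary (U : 'M[C]_d) : Prop := U *m adj U = 1%:M.

(* representatives of Clifford group elements (the U(1) quotient is irrelevant
   for the two-copy representation) *)
Definition clifford (U : 'M[C]_d) : Prop :=
  unitary U /\ forall P, inPauliGroup P -> inPauliGroup (U *m P *m adj U).

Definition phi2 (U : 'M[C]_d) (X : 'M[C]_(d * d)) : 'M[C]_(d * d) :=
  (U *t U) *m X *m adj (U *t U).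

End Defs.

From HB Require Import structures.
From mathcomp Require Import all_boot all_order all_algebra.
From mathcomp Require Import complex mxtens ring.
Set Implicit Arguments. Unset Strict Implicit. Unset Printing Implicit Defensive.
Import GRing.Theory Num.Theory.
Local Open Scope ring_scope.

(* The intertwiner is f X = F X - X F, where F is the swap operator of
   C^d (x) C^d.  As F commutes with every U (x) U, f is equivariant, and
   f (f X) = 4 X whenever F X F = -X, which holds on all spans of the
   antisymmetric tensors A_{s,t}; so f is injective there.

   Write F = d^-1 sum_m P_m (x) P_m.  In f A_{s,t} only the strings m that
   commute with exactly one of s, t survive, each contributing a multiple of
   A_{ms,mt}, and ms, mt then commute iff s, t anticommute.  Hence f maps
   V_[A] into V_{A}, while for anticommuting s, t the terms m = s and m = t
   add a multiple of E(P_s P_t), where E(M) = 1 (x) M - M (x) 1, to an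
   element of V_[A].

   The generators of V_adj are nonzero multiples of f E(P_t), and
   <f E(P_t), Y> = tr (E(P_t) f Y).  For Y = f X with X in V_[A] this is
   4 tr (E(P_t) X) = 0.  For Y = sum c_{s,t} A_{s,t} in V_{A}, f Y is an
   element of V_[A] plus (4/d) E(M) with M = sum c_{s,t} P_s P_t, and the
   pairing is 8 tr (P_t M); so if Y is orthogonal to V_adj, every Pauli
   coordinate of M vanishes, f Y lies in V_[A] and Y = f (f Y / 4). *)

(** * Tensor products, the swap matrix and antisymmetric tensors *)

Section TensorProduct.
Variable R : comNzRingType.

Lemma tensmx_is_bilinear m n p r : bilinear_for
  (GRing.Scale.Law.clone _ _ *:%R _) (GRing.Scale.Law.clone _ _ *:%R _)
  (@tensmx R m n p r).
Proof.
split=> [B|A] a X Y; apply/matrixP => i j; rewrite !mxE.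
- by rewrite mulrDl mulrA.
- by rewrite mulrDr mulrCA.
Qed.

HB.instance Definition _ m n p r := bilinear_isBilinear.Build R
  'M[R]_(m, n) 'M[R]_(p, r) 'M[R]_(m * p, n * r) _ _ (@tensmx R m n p r)
  (tensmx_is_bilinear m n p r).

Lemma eq_mxtens_index m n (i k : 'I_m) (j l : 'I_n) :
  (mxtens_index (i, j) == mxtens_index (k, l)) = (i == k) && (j == l).
Proof. by rewrite (can_eq (@mxtens_indexK m n)) xpair_eqE. Qed.

Lemma tensmx11 m n : (1%:M : 'M[R]_m) *t (1%:M : 'M[R]_n) = 1%:M.
Proof.
apply/matrixP => x y.
case: (mxtens_indexP x) => i j; case: (mxtens_indexP y) => k l.
by rewrite tensmxE !mxE eq_mxtens_index -natrM mulnb.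
Qed.

Lemma mxtrace_tensmx m n (A : 'M[R]_m) (B : 'M[R]_n) :
  \tr (A *t B) = \tr A * \tr B.
Proof. by rewrite /mxtrace mulr_sum; apply: eq_bigr => i _; rewrite mxE. Qed.

Definition swap_index n (x : 'I_(n * n)) : 'I_(n * n) :=
  mxtens_index ((mxtens_unindex x).2, (mxtens_unindex x).1).

Lemma swap_indexK n : involutive (@swap_index n).
Proof. by move=> x; rewrite /swap_index mxtens_indexK mxtens_unindexK. Qed.

Lemma swap_indexE n (i j : 'I_n) :
  swap_index (mxtens_index (i, j)) = mxtens_index (j, i).
Proof. by rewrite /swap_index mxtens_indexK. Qed.

Definition swapmx n : 'M[R]_(n * n) := \matrix_(x, y) (y == swap_index x)%:R.

Lemma mul_swapmxE n m (M : 'M[R]_(n * n, m)) x y :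
  (swapmx n *m M) x y = M (swap_index x) y.
Proof.
rewrite !mxE (bigD1 (swap_index x)) //= mxE eqxx mul1r big1 ?addr0 // => z.
by rewrite mxE => /negbTE ->; rewrite mul0r.
Qed.

Lemma mulmx_swapE n m (M : 'M[R]_(m, n * n)) x y :
  (M *m swapmx n) x y = M x (swap_index y).
Proof.
rewrite !mxE (bigD1 (swap_index y)) //= mxE swap_indexK eqxx mulr1.
rewrite big1 ?addr0 // => z; rewrite mxE; have [->|] := eqVneq y (swap_index z).
  by rewrite swap_indexK eqxx.
by rewrite mulr0.
Qed.

Lemma swapmxK n : swapmx n *m swapmx n = 1%:M.
Proof. by apply/matrixP => x y; rewrite mul_swapmxE !mxE swap_indexK eq_sym. Qed.

Lemma swapmx_tensmx n (A B : 'M[R]_n) :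
  swapmx n *m (A *t B) = (B *t A) *m swapmx n.
Proof.
apply/matrixP => x y; rewrite mul_swapmxE mulmx_swapE.
case: (mxtens_indexP x) => i j; case: (mxtens_indexP y) => k l.
by rewrite !swap_indexE !tensmxE mulrC.
Qed.

Definition wedge n (A B : 'M[R]_n) : 'M[R]_(n * n) := A *t B - B *t A.

Fact wedge_is_semilinear n (A : 'M[R]_n) : semilinear (wedge A).
Proof.
split=> [a B|B B']; rewrite /wedge.
- by rewrite linearZr_LR linearZl_LR scalerBr.
- by rewrite linearDr linearDl opprD addrACA.
Qed.

HB.instance Definition _ n (A : 'M[R]_n) :=
  GRing.isSemilinear.Build R 'M[R]_n 'M[R]_(n * n) _ (wedge A)
    (wedge_is_semilinear A).

Lemma wedgeZr n a (A B : 'M[R]_n) : wedge A (a *: B) = a *: wedge A B.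
Proof. exact: linearZ. Qed.

Lemma wedge_sumr n (A : 'M[R]_n) (I : finType) (Q : pred I) (B : I -> 'M[R]_n) :
  wedge A (\sum_(i | Q i) B i) = \sum_(i | Q i) wedge A (B i).
Proof. exact: linear_sum. Qed.

Lemma wedgeNl n (A B : 'M[R]_n) : wedge (- A) B = wedge B A.
Proof. by rewrite /wedge linearNl linearNr /= opprK addrC. Qed.

Lemma wedgeZZ n a b (A B : 'M[R]_n) : wedge (a *: A) (b *: B) = (a * b) *: wedge A B.
Proof.
by rewrite /wedge !linearZl_LR !linearZr_LR /= !scalerA (mulrC b) -scalerBr.
Qed.

Lemma swapmx_wedge n (A B : 'M[R]_n) :
  swapmx n *m wedge A B *m swapmx n = - wedge A B.
Proof.
by rewrite /wedge mulmxBr mulmxBl !swapmx_tensmx -!mulmxA swapmxK !mulmx1 opprB.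
Qed.

Lemma tensmx_mul_wedge n (U A B : 'M[R]_n) :
  (U *t U) *m wedge A B = wedge (U *m A) (U *m B).
Proof. by rewrite mulmxBr !tensmx_mul. Qed.

Lemma wedge_mul_tensmx n (U A B : 'M[R]_n) :
  wedge A B *m (U *t U) = wedge (A *m U) (B *m U).
Proof. by rewrite mulmxBl !tensmx_mul. Qed.

Lemma mxtrace_wedge_mul n (A B A' B' : 'M[R]_n) :
  \tr (wedge A B *m wedge A' B') =
  2%:R * (\tr (A *m A') * \tr (B *m B') - \tr (A *m B') * \tr (B *m A')).
Proof.
rewrite mulmxBl !mulmxBr !tensmx_mul !raddfB /= !mxtrace_tensmx.
ring.
Qed.

Section Cast.
Variables (m m' : nat) (e : m = m').

Lemma castmx_mulmx (A B : 'M[R]_m) :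
  castmx (e, e) A *m castmx (e, e) B = castmx (e, e) (A *m B).
Proof. by case: m' / e. Qed.

Lemma castmxZ a (A : 'M[R]_m) : castmx (e, e) (a *: A) = a *: castmx (e, e) A.
Proof. by case: m' / e. Qed.

Lemma castmx1 : castmx (e, e) (1%:M : 'M[R]_m) = 1%:M.
Proof. by case: m' / e. Qed.

Lemma mxtrace_castmx (A : 'M[R]_m) : \tr (castmx (e, e) A) = \tr A.
Proof. by case: m' / e. Qed.

End Cast.

Lemma tensmx_castr m n p r p' r' (e1 : p = p') (e2 : r = r')
    (A : 'M[R]_(m, n)) (B : 'M[R]_(p, r)) :
  A *t castmx (e1, e2) B =
  castmx (congr1 (muln m) e1, congr1 (muln n) e2) (A *t B).
Proof. by case: p' / e1; case: r' / e2; rewrite castmx_id. Qed.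

End TensorProduct.

Lemma big_tuple_cons (V : nmodType) (T : finType) n (F : n.+1.-tuple T -> V) :
  \sum_(t : n.+1.-tuple T) F t =
  \sum_(a : T) \sum_(s : n.-tuple T) F [tuple of a :: s].
Proof.
rewrite pair_big /= (reindex (fun p : T * n.-tuple T => [tuple of p.1 :: p.2])) //.
exists (fun t : n.+1.-tuple T => (thead t, [tuple of behead t])) => [[a s] _|t _].
  by congr (_, _); apply: val_inj.
by case/tupleP: t => a s; apply: val_inj.
Qed.

(** * Conjugate transpose and spans *)

Section Adjoint.
Variable R : rcfType.
Local Notation C := R[i].
Local Open Scope complex_scope.

Fact adj_is_zmod_morphism m n : zmod_morphism (@adj R m n).
Proof. by move=> A B; apply/matrixP => i j; rewrite !mxE rmorphB. Qed.

HB.instance Definition _ m n := GRing.isZmodMorphism.Build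
  'M[C]_(m, n) 'M[C]_(n, m) (@adj R m n) (@adj_is_zmod_morphism m n).

Lemma adjmxZ m n a (A : 'M[C]_(m, n)) : adj (a *: A) = a^* *: adj A.
Proof. by apply/matrixP => i j; rewrite !mxE rmorphM. Qed.

Lemma adjmx_mul m n p (A : 'M[C]_(m, n)) (B : 'M[C]_(n, p)) :
  adj (A *m B) = adj B *m adj A.
Proof. by rewrite /adj map_mxM trmx_mul. Qed.

Lemma adjmx1 n : adj (1%:M : 'M[C]_n) = 1%:M.
Proof. by apply/matrixP => i j; rewrite !mxE rmorph_nat eq_sym. Qed.

Lemma adjmx_tens m n p r (A : 'M[C]_(m, n)) (B : 'M[C]_(p, r)) :
  adj (A *t B) = adj A *t adj B.
Proof. by rewrite /adj map_mxT trmx_tens. Qed.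

Lemma adjmx_cast m m' n n' (e1 : m = m') (e2 : n = n') (A : 'M[C]_(m, n)) :
  adj (castmx (e1, e2) A) = castmx (e2, e1) (adj A).
Proof. by case: m' / e1; case: n' / e2. Qed.

Lemma adjmx_swap n : adj (swapmx C n) = swapmx C n.
Proof.
apply/matrixP => x y; rewrite !mxE rmorph_nat.
suff -> : (x == swap_index y) = (y == swap_index x) by [].
by apply/eqP/eqP => ->; rewrite swap_indexK.
Qed.

Lemma adjmx_wedge n (A B : 'M[C]_n) : adj (wedge A B) = wedge (adj A) (adj B).
Proof. by rewrite /wedge raddfB /= !adjmx_tens. Qed.

End Adjoint.

Section Span.
Variables (R : rcfType) (q : nat) (I : finType) (Pr : pred I).
Local Notation C := R[i].
Local Notation M := 'M[C]_(2 ^ q * 2 ^ q).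
Variable g : I -> M.

Lemma inspanP X :
  reflect (exists c : I -> C, X = \sum_(i | Pr i) c i *: g i) (inspan Pr g X).
Proof.
apply: (iffP (sub_sums_genmxP _ _ _)) => [[u hu]|[c ->]].
  exists (fun i => u i 0 0); apply: (can_inj (@mxvecK _ _ _)).
  rewrite hu linear_sum; apply: eq_bigr => i _.
  by rewrite linearZ /= -mul_scalar_mx -mx11_scalar.
exists (fun i => (c i)%:M); rewrite linear_sum; apply: eq_bigr => i _.
by rewrite linearZ /= mul_scalar_mx.
Qed.

Lemma inspan_gen i : Pr i -> inspan Pr g (g i).
Proof. by move=> Pi; rewrite /inspan (sumsmx_sup i) // genmxE. Qed.

Lemma inspanZ a X : inspan Pr g X -> inspan Pr g (a *: X).
Proof. by rewrite /inspan linearZ; apply: scalemx_sub. Qed.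

Lemma inspan_sum (J : finType) (Q : pred J) (Z : J -> M) :
  (forall j, Q j -> inspan Pr g (Z j)) -> inspan Pr g (\sum_(j | Q j) Z j).
Proof. by move=> h; rewrite /inspan linear_sum; apply: summx_sub. Qed.

Lemma inspan_scale (g' : I -> M) (k : C) : k != 0 ->
  (forall i, g' i = k *: g i) -> inspan Pr g' =1 inspan Pr g.
Proof.
move=> k_neq0 g'E X; rewrite /inspan; congr (_ <= _)%MS; apply: eq_bigr => i _.
by apply/genmxP; rewrite g'E linearZ; apply/eqmxP/eqmx_scale.
Qed.

End Span.

(** * Pauli matrices and Pauli strings *)

Section PauliLetters.
Variable R : rcfType.
Local Notation C := R[i].
Local Notation p1 := (pauli1 R).
Local Open Scope complex_scope.

(* Up to a phase, the product of two single-qubit Pauli matrices is the one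
   whose letter is the bitwise xor of their letters. *)
Definition xor4 (a b : 'I_4) : 'I_4 :=
  Ordinal (ltn_pmod (Nat.lxor a b) (isT : (0 < 4)%N)).

Definition phase1 (a b : 'I_4) : C :=
  match nat_of_ord a, nat_of_ord b with
  | 1, 2 | 2, 3 | 3, 1 => 'i
  | 2, 1 | 3, 2 | 1, 3 => - 'i
  | _, _ => 1
  end.

Lemma xor4_eq0 a b : (xor4 a b == ord0) = (a == b).
Proof. by case: a => [[|[|[|[|//]]]] ?]; case: b => [[|[|[|[|//]]]] ?]. Qed.

Lemma xor4_inj_eq m a b : (xor4 m a == xor4 m b) = (a == b).
Proof.
by case: m => [[|[|[|[|//]]]] ?]; case: a => [[|[|[|[|//]]]] ?];
   case: b => [[|[|[|[|//]]]] ?].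
Qed.

Lemma xor4C a b : xor4 a b = xor4 b a.
Proof.
by apply: val_inj; case: a => [[|[|[|[|//]]]] ?]; case: b => [[|[|[|[|//]]]] ?].
Qed.

Lemma sqr_complexi : 'i * 'i = -1 :> C.
Proof. by rewrite -expr2 sqr_i. Qed.

Lemma complexi_neq0 : 'i != 0 :> C.
Proof. by apply/eqP; case; apply/eqP; rewrite oner_eq0. Qed.

Lemma phase1_neq0 a b : phase1 a b != 0.
Proof.
case: a => [[|[|[|[|//]]]] ?]; case: b => [[|[|[|[|//]]]] ?];
by rewrite /phase1 /= ?oppr_eq0 ?oner_eq0 ?complexi_neq0.
Qed.

Ltac pauli1_simp := rewrite ?(complexiE, mulrN, mulNr, sqr_complexi, opprK,
  mul1r, mulr1, mul0r, mulr0, addr0, add0r, oppr0, subr0, subrr).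

Lemma pauli1_id : p1 ord0 = 1%:M.
Proof. by apply/matrixP => x y; rewrite !mxE /=; case: eqP. Qed.

Lemma adjmx_pauli1 a : adj (p1 a) = p1 a.
Proof.
apply/matrixP => x y; rewrite !mxE.
case: a => [[|[|[|[|//]]]] ?]; case: x => [[|[|//]] ?]; case: y => [[|[|//]] ?];
by apply/eqP; rewrite eq_complex /= ?oppr0 ?opprK ?eqxx.
Qed.

Lemma pauli1_mul a b : p1 a *m p1 b = phase1 a b *: p1 (xor4 a b).
Proof.
apply/matrixP => x y; rewrite !mxE !big_ord_recl big_ord0 !mxE.
case: a => [[|[|[|[|//]]]] ?]; case: b => [[|[|[|[|//]]]] ?];
case: x => [[|[|//]] ?]; case: y => [[|[|//]] ?] /=; by pauli1_simp.
Qed.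

Lemma pauli1_sq a : p1 a *m p1 a = 1%:M.
Proof.
rewrite pauli1_mul.
have -> : xor4 a a = ord0 by apply/eqP; rewrite xor4_eq0.
by rewrite pauli1_id; case: a => [[|[|[|[|//]]]] ?]; rewrite /phase1 /= scale1r.
Qed.

Lemma pauli1_tr a : a != ord0 -> \tr (p1 a) = 0.
Proof.
rewrite /mxtrace !big_ord_recl big_ord0 !mxE.
by case: a => [[|[|[|[|//]]]] ?] //= _; pauli1_simp.
Qed.

Lemma sum_pauli1_entries (i k j l : 'I_2) :
  \sum_(a < 4) p1 a i k * p1 a j l = 2%:R * ((i == l) && (j == k))%:R.
Proof.
rewrite !big_ord_recl big_ord0 !mxE.
case: i => [[|[|//]] ?]; case: k => [[|[|//]] ?];
case: j => [[|[|//]] ?]; case: l => [[|[|//]] ?] /=; by pauli1_simp.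
Qed.

End PauliLetters.

Section PauliStrings.
Variable R : rcfType.
Local Notation C := R[i].
Local Notation P := (pauli R).

Definition txor n (s t : n.-tuple 'I_4) : n.-tuple 'I_4 :=
  [tuple of map (fun p => xor4 p.1 p.2) (zip s t)].

Lemma txor_cons n a b (s t : n.-tuple 'I_4) :
  txor [tuple of a :: s] [tuple of b :: t] = [tuple of xor4 a b :: txor s t].
Proof. exact: val_inj. Qed.

Lemma txorC n (s t : n.-tuple 'I_4) : txor s t = txor t s.
Proof.
elim: n s t => [|n IH] s t; first by rewrite (tuple0 s) (tuple0 t).
case/tupleP: s => a s; case/tupleP: t => b t.
by rewrite !txor_cons xor4C IH.
Qed.

Lemma eq_tuple_cons n a b (s t : n.-tuple 'I_4) :
  ([tuple of a :: s] == [tuple of b :: t]) = (a == b) && (s == t).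
Proof. by rewrite -val_eqE /= eqseq_cons. Qed.

Lemma txor_inj_eq n (m s t : n.-tuple 'I_4) : (txor m s == txor m t) = (s == t).
Proof.
elim: n m s t => [|n IH] m s t; first by rewrite (tuple0 s) (tuple0 t) !eqxx.
case/tupleP: m => c m; case/tupleP: s => a s; case/tupleP: t => b t.
by rewrite !txor_cons !eq_tuple_cons IH xor4_inj_eq.
Qed.

Lemma nonid_cons n a (s : n.-tuple 'I_4) :
  nonid [tuple of a :: s] = (a != ord0) || nonid s.
Proof. by rewrite /nonid /= negb_and. Qed.

Lemma nonidPn n (s : n.-tuple 'I_4) : ~~ nonid s -> s = nseq_tuple n ord0.
Proof.
by rewrite /nonid negbK => /all_pred1P h; apply: val_inj; rewrite /= h size_tuple.
Qed.

Lemma nonid_txor n (s t : n.-tuple 'I_4) : nonid (txor s t) = (s != t).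
Proof.
elim: n s t => [|n IH] s t; first by rewrite (tuple0 s) (tuple0 t).
case/tupleP: s => a s; case/tupleP: t => b t.
by rewrite txor_cons nonid_cons IH eq_tuple_cons negb_and xor4_eq0.
Qed.

Lemma pauli_cons n a (s : n.-tuple 'I_4) :
  P [tuple of a :: s] =
  castmx (esym (expnS 2 n), esym (expnS 2 n)) (pauli1 R a *t P s).
Proof. by rewrite /pauli /= tensmx_castr !castmx_comp; apply: eq_castmx. Qed.

Lemma pauli_nil (s : 0.-tuple 'I_4) : P s = 1%:M.
Proof. by rewrite (tuple0 s) /pauli /= castmx1. Qed.

Lemma pauli_id n : P (nseq_tuple n ord0) = 1%:M.
Proof.
elim: n => [|n IH]; first exact: pauli_nil.
have -> : nseq_tuple n.+1 (ord0 : 'I_4) = [tuple of ord0 :: nseq_tuple n ord0].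
  exact: val_inj.
by rewrite pauli_cons pauli1_id IH tensmx11 castmx1.
Qed.

Lemma adjmx_pauli n (s : n.-tuple 'I_4) : adj (P s) = P s.
Proof.
elim: n s => [|n IH] s; first by rewrite pauli_nil adjmx1.
by case/tupleP: s => a s; rewrite pauli_cons adjmx_cast adjmx_tens adjmx_pauli1 IH.
Qed.

Lemma pauli_sq n (s : n.-tuple 'I_4) : P s *m P s = 1%:M.
Proof.
elim: n s => [|n IH] s; first by rewrite pauli_nil mul1mx.
case/tupleP: s => a s.
by rewrite pauli_cons castmx_mulmx tensmx_mul pauli1_sq IH tensmx11 castmx1.
Qed.

Lemma pauli_mul n (s t : n.-tuple 'I_4) :
  exists2 c : C, c != 0 & P s *m P t = c *: P (txor s t).
Proof.
elim: n s t => [|n IH] s t.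
  by exists 1; rewrite ?oner_eq0 // !pauli_nil mul1mx scale1r.
case/tupleP: s => a s; case/tupleP: t => b t; have [c c_neq0 hc] := IH s t.
exists (phase1 R a b * c); first by rewrite mulf_neq0 ?phase1_neq0.
rewrite txor_cons !pauli_cons castmx_mulmx tensmx_mul pauli1_mul hc.
by rewrite linearZl_LR linearZr_LR /= scalerA castmxZ.
Qed.

Lemma mx1_neq0 n : (1%:M : 'M[C]_(2 ^ n)) != 0.
Proof.
apply/eqP => /(congr1 mxtrace)/eqP.
by rewrite mxtrace1 mxtrace0 pnatr_eq0 expn_eq0.
Qed.

Lemma pauli_mul_neq0 n (s t : n.-tuple 'I_4) : P s *m P t != 0.
Proof.
have e : (P s *m P t) *m (P t *m P s) = 1%:M.
  by rewrite mulmxA -(mulmxA (P s)) pauli_sq mulmx1 pauli_sq.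
by apply: contraTneq (mx1_neq0 n) => st0; rewrite -e st0 mul0mx eqxx.
Qed.

Lemma pauli_comm_or n (s t : n.-tuple 'I_4) :
  P t *m P s = P s *m P t \/ P t *m P s = - (P s *m P t).
Proof.
(* P t P s = l P s P t with l = c' / c, and conjugating by P s gives l ^+ 2 = 1. *)
have [c c_neq0 hc] := pauli_mul s t; have [c' _ hc'] := pauli_mul t s.
have hl : P t *m P s = (c' / c) *: (P s *m P t).
  by rewrite hc hc' txorC scalerA divfK.
set l := c' / c in hl.
have e : P s *m (P t *m P s) *m P s = P s *m P t.
  by rewrite -!mulmxA pauli_sq mulmx1.
rewrite hl -scalemxAr -scalemxAl mulmxA pauli_sq mul1mx hl scalerA in e.
have /eqP : (l * l - 1) *: (P s *m P t) = 0 by rewrite scalerBl e scale1r subrr.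
rewrite scaler_eq0 (negbTE (pauli_mul_neq0 s t)) orbF subr_eq0 -expr2 sqrf_eq1.
by case/orP => /eqP l1; [left | right]; rewrite hl l1 ?scale1r ?scaleN1r.
Qed.

Lemma pauli_tr n (s : n.-tuple 'I_4) : nonid s -> \tr (P s) = 0.
Proof.
elim: n s => [|n IH] s; first by rewrite (tuple0 s).
case/tupleP: s => a s; rewrite nonid_cons pauli_cons mxtrace_castmx mxtrace_tensmx.
by case/orP => [/pauli1_tr -> | /IH ->]; rewrite ?mul0r ?mulr0.
Qed.

Lemma mxtrace_pauli_mul n (s t : n.-tuple 'I_4) : s != t -> \tr (P s *m P t) = 0.
Proof.
move=> st; have [c _ ->] := pauli_mul s t.
by rewrite linearZ /= pauli_tr ?mulr0 ?nonid_txor.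
Qed.

Lemma sum_pauli_entries n (i k j l : 'I_(2 ^ n)) :
  \sum_(s : n.-tuple 'I_4) P s i k * P s j l =
  (2 ^ n)%:R * ((i == l) && (j == k))%:R.
Proof.
elim: n i k j l => [|n IH] i k j l.
  have ord_0 (x : 'I_(2 ^ 0)) : x = ord0 by apply: val_inj; case: x => [[]].
  rewrite (ord_0 k) (ord_0 l) (ord_0 j) (ord_0 i) !eqxx mulr1.
  rewrite (eq_bigr (fun=> 1)) => [|s _]; last by rewrite pauli_nil !mxE mulr1.
  by rewrite sumr_const card_tuple card_ord.
set e := esym (esym (expnS 2 n)).
rewrite big_tuple_cons; under eq_bigr do under eq_bigr do
  rewrite pauli_cons !castmxE -/e.
rewrite -(inj_eq (@cast_ord_inj _ _ e) i) -(inj_eq (@cast_ord_inj _ _ e) j).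
case: (mxtens_indexP (cast_ord e i)) => i1 i2.
case: (mxtens_indexP (cast_ord e k)) => k1 k2.
case: (mxtens_indexP (cast_ord e j)) => j1 j2.
case: (mxtens_indexP (cast_ord e l)) => l1 l2.
under eq_bigr do under eq_bigr do rewrite !tensmxE mulrACA.
under eq_bigr do rewrite -mulr_sumr IH.
rewrite -mulr_suml sum_pauli1_entries !eq_mxtens_index expnS natrM.
rewrite mulrACA; congr (_ * _); rewrite -natrM mulnb.
by case: (i1 == l1); case: (i2 == l2); case: (j1 == k1); case: (j2 == k2).
Qed.

Lemma pauli_coord n (M : 'M[C]_(2 ^ n)) :
  (2 ^ n)%:R *: M = \sum_(s : n.-tuple 'I_4) \tr (P s *m M) *: P s.
Proof.
apply/matrixP => j l; rewrite mxE summxE.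
under eq_bigr => s _ do rewrite mxE /mxtrace mulr_suml.
under eq_bigr => s _ do under eq_bigr => i _ do rewrite mxE mulr_suml.
rewrite exchange_big; under eq_bigr => i _ do rewrite exchange_big.
under eq_bigr => i _ do under eq_bigr => k _ do
  under eq_bigr => s _ do rewrite mulrAC.
under eq_bigr => i _ do under eq_bigr => k _ do
  rewrite -mulr_suml sum_pauli_entries.
rewrite (bigD1 l) //= [X in _ + X]big1 ?addr0 => [|i /negbTE il]; last first.
  by apply: big1 => k _; rewrite il !mulr0 mul0r.
rewrite (bigD1 j) //= [X in _ + X]big1 ?addr0 => [|k /negbTE kj]; last first.
  by rewrite eq_sym kj andbF !mulr0 mul0r.
by rewrite !eqxx !mulr1 mulrC.
Qed.

End PauliStrings.

(** * The commutator with the swap *)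

Section SwapCommutator.
Variables (R : rcfType) (q : nat).
Local Notation C := R[i].
Local Notation d := (2 ^ q)%N.
Local Notation dC := (d%:R : C).
Local Notation tuple := (q.-tuple 'I_4).
Local Notation P := (@pauli R q).
Local Notation F := (swapmx C d).
Local Notation W a b := (wedge (P a) (P b)).
Local Notation isqrtd := (sqrtC dC)^-1.
Local Open Scope complex_scope.

Lemma dC_neq0 : dC != 0.
Proof. by rewrite pnatr_eq0 expn_eq0. Qed.

Lemma isqrtd_neq0 : isqrtd != 0.
Proof. by rewrite invr_eq0 sqrtC_eq0 dC_neq0. Qed.

Lemma four_neq0 : 4%:R != 0 :> C.
Proof. by rewrite pnatr_eq0. Qed.

Definition pcomm (s t : tuple) := P s *m P t == P t *m P s.

Definition psign (s t : tuple) : C := if pcomm s t then 1 else -1.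

Lemma pcommC s t : pcomm s t = pcomm t s.
Proof. by rewrite /pcomm eq_sym. Qed.

Lemma pcommxx s : pcomm s s.
Proof. exact: eqxx. Qed.

Lemma pcomm_id s : pcomm (nseq_tuple q ord0) s.
Proof. by rewrite /pcomm pauli_id mul1mx mulmx1. Qed.

Lemma pauli_swap s t : P t *m P s = psign s t *: (P s *m P t).
Proof.
rewrite /psign /pcomm; have [->|st] := eqVneq; first by rewrite scale1r.
by have [ts|->] := pauli_comm_or R s t; [rewrite ts eqxx in st | rewrite scaleN1r].
Qed.

Lemma pauli_conj m a : P m *m P a *m P m = psign m a *: P a.
Proof. by rewrite -mulmxA pauli_swap -scalemxAr mulmxA pauli_sq mul1mx. Qed.

Lemma nsig_mul s t : nsig R s *m nsig R t = isqrtd ^+ 2 *: (P s *m P t).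
Proof. by rewrite /nsig -scalemxAl -scalemxAr scalerA expr2. Qed.

Lemma Nset_pcomm s t : (s \in Nset R t) = nonid s && ~~ pcomm s t.
Proof.
rewrite inE !nsig_mul -scalerDr scaler_eq0 expf_eq0 (negbTE isqrtd_neq0) andbF /=.
congr (_ && _); rewrite (pauli_swap s t) /psign; case: (pcomm s t) => /=.
  rewrite scale1r -mulr2n -scaler_nat scaler_eq0 pnatr_eq0 /=.
  exact: negbTE (pauli_mul_neq0 R s t).
by rewrite scaleN1r subrr eqxx.
Qed.

Lemma Cset_pcomm s t : (s \in Cset R t) = [&& nonid s, s != t & pcomm s t].
Proof. by rewrite inE !nsig_mul (inj_eq (scalerI _)) // expf_neq0 // isqrtd_neq0. Qed.

Lemma psign_Nset t s : psign t s = if s \in Nset R t then -1 else 1.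
Proof.
rewrite Nset_pcomm /psign (pcommC s t).
by have [_|/nonidPn ->] := boolP (nonid s); [case: pcomm | rewrite pcommC pcomm_id].
Qed.

Lemma N1_neq1 : -1 != 1 :> C.
Proof. by rewrite -subr_eq0 -opprD oppr_eq0 -mulr2n pnatr_eq0. Qed.

(* (P m P a) (P m P b) and (P m P b) (P m P a) are psign m a P a P b and
   psign m b P b P a, up to the same nonzero factor. *)
Lemma pcomm_txor m a b :
  pcomm m a != pcomm m b -> pcomm (txor m a) (txor m b) = ~~ pcomm a b.
Proof.
move=> hm; have [ca ca0 hca] := pauli_mul R m a; have [cb cb0 hcb] := pauli_mul R m b.
have e x y : P m *m P x *m (P m *m P y) = psign m x *: (P x *m P y).
  by rewrite mulmxA pauli_conj -scalemxAl.
rewrite -[LHS]/(P (txor m a) *m P (txor m b) == P (txor m b) *m P (txor m a)).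
rewrite -(scalerK ca0 (P (txor m a))) -(scalerK cb0 (P (txor m b))) -hca -hcb.
rewrite -!scalemxAl -!scalemxAr !scalerA (mulrC cb^-1).
rewrite (inj_eq (scalerI _)) ?mulf_neq0 ?invr_eq0 // !e (pauli_swap a b) scalerA.
rewrite -subr_eq0 -scalerBl scaler_eq0 (negbTE (pauli_mul_neq0 R a b)) orbF subr_eq0.
move: hm; rewrite /psign.
case: (pcomm m a); case: (pcomm m b); case: (pcomm a b) => //= _;
by rewrite ?(mulr1, mul1r, mulrNN, eqxx) // ?(negbTE N1_neq1) // eq_sym (negbTE N1_neq1).
Qed.

Lemma swapmx_sum_pauli : dC *: F = \sum_(s : tuple) P s *t P s.
Proof.
apply/matrixP => x y; case: (mxtens_indexP x) => i j; case: (mxtens_indexP y) => k l.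
rewrite summxE; under eq_bigr do rewrite tensmxE.
rewrite sum_pauli_entries !mxE swap_indexE eq_mxtens_index.
by rewrite (eq_sym k) (eq_sym l) andbC.
Qed.

Definition swapcomm (X : 'M[C]_(d * d)) : 'M[C]_(d * d) := F *m X - X *m F.

Arguments swapcomm : simpl never.

Fact swapcomm_is_semilinear : semilinear swapcomm.
Proof.
split=> [a X|X Y]; rewrite /swapcomm.
  by rewrite -scalemxAr -scalemxAl scalerBr.
by rewrite mulmxDr mulmxDl opprD addrACA.
Qed.

HB.instance Definition _ := GRing.isSemilinear.Build C 'M[C]_(d * d)
  'M[C]_(d * d) _ swapcomm swapcomm_is_semilinear.

Lemma swapcommZ a X : swapcomm (a *: X) = a *: swapcomm X.
Proof. exact: linearZ. Qed.

Lemma swapcomm_sum (J : finType) (Q : pred J) (Z : J -> 'M[C]_(d * d)) :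
  swapcomm (\sum_(j | Q j) Z j) = \sum_(j | Q j) swapcomm (Z j).
Proof. exact: linear_sum. Qed.

Lemma swapcommK X : F *m X *m F = - X -> swapcomm (swapcomm X) = 4%:R *: X.
Proof.
move=> FXF; rewrite /swapcomm mulmxBr mulmxBl !mulmxA swapmxK mul1mx.
rewrite -[X *m F *m F]mulmxA swapmxK mulmx1 FXF.
by rewrite opprB opprK addrACA -!mulr2n -mulrnA scaler_nat.
Qed.

Lemma swapcomm_eq0 X : F *m X *m F = - X -> swapcomm X = 0 -> X = 0.
Proof.
move=> /swapcommK XX X0; apply: (scalerI four_neq0).
by rewrite -XX X0 linear0 scaler0.
Qed.

Lemma swapcomm_phi2 U X : swapcomm (phi2 U X) = phi2 U (swapcomm X).
Proof.
rewrite /swapcomm /phi2 adjmx_tens mulmxBr mulmxBl !mulmxA (swapmx_tensmx U U).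
by rewrite -!mulmxA (swapmx_tensmx (adj U) (adj U)).
Qed.

Lemma scale_swapcomm_pauli X :
  dC *: swapcomm X = \sum_(s : tuple) ((P s *t P s) *m X - X *m (P s *t P s)).
Proof.
rewrite /swapcomm scalerBr scalemxAl scalemxAr swapmx_sum_pauli.
by rewrite mulmx_suml mulmx_sumr -sumrB.
Qed.

Lemma one_sub_psign_mul a b c :
  1 - psign a b * psign a c = if pcomm a b != pcomm a c then 2%:R else 0.
Proof.
rewrite /psign; case: (pcomm a b); case: (pcomm a c) => /=;
by rewrite ?(mulr1, mul1r, mulrNN, opprK, subrr).
Qed.

Lemma swapcomm_wedge_pauli a b :
  dC *: swapcomm (W a b) =
  \sum_(m | pcomm m a != pcomm m b) 2%:R *: wedge (P m *m P a) (P m *m P b).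
Proof.
(* The m-th term is (1 - psign m a * psign m b) (P m (x) P m) (W a b). *)
rewrite scale_swapcomm_pauli [RHS]big_mkcond; apply: eq_bigr => m _.
set Q := P m *t P m.
have QQ : Q *m Q = 1%:M by rewrite tensmx_mul pauli_sq tensmx11.
have QWQ : Q *m W a b *m Q = (psign m a * psign m b) *: W a b.
  by rewrite tensmx_mul_wedge wedge_mul_tensmx !pauli_conj wedgeZZ.
have -> : W a b *m Q = Q *m ((psign m a * psign m b) *: W a b).
  by rewrite -QWQ !mulmxA QQ mul1mx.
rewrite -scalemxAr -{1}[Q *m W a b]scale1r -scalerBl tensmx_mul_wedge.
by rewrite one_sub_psign_mul; case: ifP => _; [congr (_ *: _) | apply: scale0r].
Qed.

Lemma wedge_mul_txor m a b : exists2 c : C, c != 0 &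
  wedge (P m *m P a) (P m *m P b) = c *: W (txor m a) (txor m b).
Proof.
have [ca ca0 ->] := pauli_mul R m a; have [cb cb0 ->] := pauli_mul R m b.
by exists (ca * cb); rewrite ?mulf_neq0 ?wedgeZZ.
Qed.

Lemma AmxE (A B : 'M[C]_d) : Amx A B = (sqrtC 2%:R)^-1 *: wedge A B.
Proof. by []. Qed.

Lemma Amx_nsig s t :
  Amx (nsig R s) (nsig R t) = ((sqrtC 2%:R)^-1 * isqrtd ^+ 2) *: W s t.
Proof. by rewrite AmxE /nsig wedgeZZ scalerA expr2. Qed.

Lemma Amx_nsig_coef_neq0 : (sqrtC 2%:R)^-1 * isqrtd ^+ 2 != 0 :> C.
Proof.
by rewrite mulf_neq0 ?expf_neq0 ?isqrtd_neq0 // invr_eq0 sqrtC_eq0 pnatr_eq0.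
Qed.

Local Notation anti_pair :=
  (fun p : tuple * tuple => nonid p.2 && (p.1 \in Nset R p.2)).
Local Notation comm_pair :=
  (fun p : tuple * tuple => nonid p.2 && (p.1 \in Cset R p.2)).
Local Notation Wpair := (fun p : tuple * tuple => W p.1 p.2).

Lemma inVAE X : inVA X = inspan anti_pair Wpair X.
Proof. exact: inspan_scale Amx_nsig_coef_neq0 (fun p => Amx_nsig p.1 p.2) X. Qed.

Lemma inVcAE X : inVcA X = inspan comm_pair Wpair X.
Proof. exact: inspan_scale Amx_nsig_coef_neq0 (fun p => Amx_nsig p.1 p.2) X. Qed.

Lemma comm_pair_nonid p : comm_pair p -> nonid p.1 && nonid p.2.
Proof. by case/andP => n2; rewrite Cset_pcomm => /and3P[-> _ _]. Qed.

Lemma span_wedge_antisym (Pr : pred (tuple * tuple)) X :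
  inspan Pr Wpair X -> F *m X *m F = - X.
Proof.
case/inspanP => c ->; rewrite mulmx_sumr mulmx_suml -sumrN; apply: eq_bigr => p _.
by rewrite -scalemxAr -scalemxAl swapmx_wedge scalerN.
Qed.

Lemma mxtrace_wedge1_span (Pr : pred (tuple * tuple)) t X :
  (forall p, Pr p -> nonid p.1 && nonid p.2) -> inspan Pr Wpair X ->
  \tr (wedge 1%:M (P t) *m X) = 0.
Proof.
move=> Pr_nonid /inspanP[c ->]; rewrite mulmx_sumr linear_sum big1 // => p.
move=> /Pr_nonid/andP[n1 n2]; rewrite -scalemxAr linearZ /= mxtrace_wedge_mul.
by rewrite !mul1mx !pauli_tr // !mul0r subrr !mulr0.
Qed.

Lemma mxtrace_wedge1 t M : nonid t ->
  \tr (wedge 1%:M (P t) *m wedge 1%:M M) = 2%:R * dC * \tr (P t *m M).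
Proof.
move=> nt; rewrite mxtrace_wedge_mul mul1mx mulmx1 mxtrace1 pauli_tr //.
by rewrite mulr0 subr0 mulrA.
Qed.

Lemma swapcomm_wedge_comm a b :
  nonid a -> nonid b -> a != b -> pcomm a b -> inVA (swapcomm (W a b)).
Proof.
move=> na nb ab cab; rewrite inVAE -(scalerK dC_neq0 (swapcomm _)).
apply: inspanZ; rewrite swapcomm_wedge_pauli; apply: inspan_sum => m hm.
have [c _ ->] := wedge_mul_txor m a b; do 2 apply: inspanZ.
apply: (@inspan_gen _ _ _ _ _ (txor m a, txor m b)).
have ma : m != a by apply: contraNneq hm => ->; rewrite pcommxx cab.
have mb : m != b by apply: contraNneq hm => ->; rewrite pcommxx pcommC cab.
by rewrite Nset_pcomm !nonid_txor ma mb pcomm_txor // cab.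
Qed.

Definition comm_part (a b : tuple) : 'M[C]_(d * d) :=
  swapcomm (W a b) - (4%:R / dC) *: wedge 1%:M (P a *m P b).

Lemma swapcomm_wedge_anti a b :
  nonid a -> nonid b -> ~~ pcomm a b -> inVcA (comm_part a b).
Proof.
move=> na nb cab; have ab : a != b by apply: contraNneq cab => ->; apply: pcommxx.
have d4 : dC * (4%:R / dC) = 4%:R by rewrite mulrCA mulfV ?mulr1 ?dC_neq0.
rewrite inVcAE /comm_part -(scalerK dC_neq0 (_ - _)) scalerBr scalerA d4.
rewrite swapcomm_wedge_pauli.
rewrite (bigD1 a); last by rewrite pcommxx (negbTE cab).
rewrite (bigD1 b); last by rewrite pcommxx pcommC (negbTE cab) (eq_sym b) ab.
rewrite [X in inspan _ _ X]/= !pauli_sq (pauli_swap a b) /psign (negbTE cab).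
rewrite scaleN1r wedgeNl addrA -scalerDl -natrD addrC addrK.
apply: inspanZ; apply: inspan_sum => m /andP[/andP[hm ma] mb].
have [c _ ->] := wedge_mul_txor m a b; do 2 apply: inspanZ.
apply: (@inspan_gen _ _ _ _ _ (txor m a, txor m b)).
by rewrite Cset_pcomm !nonid_txor ma mb txor_inj_eq ab pcomm_txor // (negbTE cab).
Qed.

Lemma sum_Nset_tens t :
  \sum_(s in Nset R t) P s *t (P s *m P t) = (dC / 2%:R) *: (F *m wedge 1%:M (P t)).
Proof.
have S2 : \sum_s (P t *m P s *m P t) *t (P s *m P t) = dC *: (F *m (P t *t 1%:M)).
  transitivity ((P t *t 1%:M) *m (dC *: F) *m (P t *t P t)).
    rewrite swapmx_sum_pauli mulmx_sumr mulmx_suml; apply: eq_bigr => s _.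
    by rewrite !tensmx_mul mul1mx.
  rewrite -scalemxAr -scalemxAl -swapmx_tensmx -mulmxA tensmx_mul mul1mx.
  by rewrite pauli_sq.
have S1 : \sum_s P s *t (P s *m P t) = dC *: (F *m (1%:M *t P t)).
  rewrite scalemxAl swapmx_sum_pauli mulmx_suml; apply: eq_bigr => s _.
  by rewrite tensmx_mul mulmx1.
(* Subtract the two expansions, using P t P s P t = psign t s P s. *)
have S12 : dC *: (F *m wedge 1%:M (P t)) =
    2%:R *: \sum_(s in Nset R t) P s *t (P s *m P t).
  transitivity (\sum_s (1 - psign t s) *: (P s *t (P s *m P t))).
    rewrite /wedge mulmxBr scalerBr -S1 -S2 -sumrB; apply: eq_bigr => s _.
    by rewrite pauli_conj linearZl_LR /= scalerBl scale1r.
  rewrite (bigID (mem (Nset R t))) /= [X in _ + X]big1 ?addr0 => [|s]; last first.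
    by rewrite psign_Nset => /negbTE ->; rewrite subrr scale0r.
  rewrite scaler_sumr; apply: eq_bigr => s Ns.
  by rewrite psign_Nset Ns opprK -mulr2n.
have two_neq0 : 2%:R != 0 :> C by rewrite pnatr_eq0.
apply: (scalerI two_neq0).
by rewrite scalerA mulrCA (mulfV two_neq0) mulr1 S12.
Qed.

Lemma sum_Nset_wedge t :
  \sum_(s in Nset R t) wedge (P s) (P s *m P t) =
  (dC / 2%:R) *: swapcomm (wedge 1%:M (P t)).
Proof.
rewrite /wedge sumrB.
have -> : \sum_(s in Nset R t) (P s *m P t) *t P s =
    F *m (\sum_(s in Nset R t) P s *t (P s *m P t)) *m F.
  rewrite mulmx_sumr mulmx_suml; apply: eq_bigr => s _.
  by rewrite swapmx_tensmx -mulmxA swapmxK mulmx1.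
rewrite sum_Nset_tens /swapcomm scalerBr -scalemxAr -scalemxAl.
by rewrite mulmxA swapmxK mul1mx.
Qed.

Lemma Amx_adjgen_term s t :
  Amx (nsig R s) ('i *: ndot (nsig R s) (nsig R t)) =
  ((sqrtC 2%:R)^-1 * (isqrtd * ('i * isqrtd))) *: wedge (P s) (P s *m P t).
Proof.
have -> : ndot (nsig R s) (nsig R t) = isqrtd *: (P s *m P t).
  by rewrite /ndot nsig_mul scalerA expr2 mulrA mulfV ?mul1r // sqrtC_eq0 dC_neq0.
by rewrite scalerA AmxE /nsig wedgeZZ scalerA.
Qed.

Lemma wedge1_pauli_neq0 t : nonid t -> wedge 1%:M (P t) != 0.
Proof.
move=> nt; apply/eqP => E0; have /eqP := mxtrace_wedge1 (P t) nt.
rewrite E0 mul0mx mxtrace0 pauli_sq mxtrace1 eq_sym !mulf_eq0.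
by rewrite !pnatr_eq0 expn_eq0.
Qed.

Lemma adjgen_swapcomm t : nonid t ->
  exists2 k : C, k != 0 & adjgen R t = k *: swapcomm (wedge 1%:M (P t)).
Proof.
move=> nt; rewrite /adjgen; under eq_bigr do rewrite Amx_adjgen_term.
rewrite -scaler_sumr sum_Nset_wedge !scalerA; eexists; last reflexivity.
(* If Nset R t were empty, the factor (sqrtC 0)^-1 = 0 would make adjgen t
   vanish; it is not, because swapcomm (wedge 1%:M (P t)) != 0. *)
have N_neq0 : #|Nset R t| != 0%N.
  apply: contra_neq (wedge1_pauli_neq0 nt) => /eqP; rewrite cards_eq0 => /eqP N0.
  have /eqP := sum_Nset_wedge t; rewrite N0 big_set0 eq_sym scaler_eq0.
  rewrite mulf_eq0 invr_eq0 !pnatr_eq0 expn_eq0 /= => /eqP E0.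
  exact: swapcomm_eq0 (swapmx_wedge 1%:M (P t)) E0.
rewrite !mulf_neq0 ?isqrtd_neq0 ?complexi_neq0 ?invr_eq0 ?sqrtC_eq0 //.
- by rewrite mulf_eq0 !pnatr_eq0 negb_or N_neq0.
- by rewrite pnatr_eq0.
- exact: dC_neq0.
- by rewrite pnatr_eq0.
Qed.

Lemma hs_swapcomm H Y : adj H = H -> hs (swapcomm H) Y = \tr (H *m swapcomm Y).
Proof.
move=> HH; rewrite /hs /swapcomm raddfB /= !adjmx_mul HH adjmx_swap.
rewrite mulmxBl mulmxBr !raddfB /= -!mulmxA; congr (_ - _).
by rewrite mxtrace_mulC mulmxA.
Qed.

Lemma hsZl a (A Y : 'M[C]_(d * d)) : hs (a *: A) Y = a^* * hs A Y.
Proof. by rewrite /hs adjmxZ -scalemxAl linearZ. Qed.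

Lemma hs_suml (J : finType) (Q : pred J) (c : J -> C) (A : J -> 'M[C]_(d * d)) Y :
  hs (\sum_(j | Q j) c j *: A j) Y = \sum_(j | Q j) (c j)^* * hs (A j) Y.
Proof.
rewrite /hs raddf_sum mulmx_suml linear_sum; apply: eq_bigr => j _.
exact: hsZl.
Qed.

Lemma adjmx_wedge1_pauli t : adj (wedge 1%:M (P t)) = wedge 1%:M (P t).
Proof. by rewrite adjmx_wedge adjmx1 adjmx_pauli. Qed.

Lemma hs_adjgen t Y : nonid t -> exists2 k : C, k != 0 &
  hs (adjgen R t) Y = k^* * \tr (wedge 1%:M (P t) *m swapcomm Y).
Proof.
move=> nt; have [k k0 ->] := adjgen_swapcomm nt; exists k => //.
by rewrite hsZl hs_swapcomm ?adjmx_wedge1_pauli.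
Qed.

Lemma swapcomm_VcA_perp X : inVcA X -> inVperp (swapcomm X).
Proof.
rewrite inVcAE => hX; split.
  case/inspanP: (hX) => c ->; rewrite linear_sum; apply: inspan_sum => p.
  case/andP=> n2; rewrite Cset_pcomm => /and3P[n1 ne cp].
  by rewrite linearZ; apply: inspanZ; apply: swapcomm_wedge_comm.
move=> Y /inspanP[c ->]; rewrite hs_suml big1 // => t nt.
have [k _ ->] := hs_adjgen (swapcomm X) nt.
rewrite swapcommK ?(span_wedge_antisym hX) // -scalemxAr linearZ /=.
by rewrite (mxtrace_wedge1_span _ comm_pair_nonid hX) !mulr0.
Qed.

Lemma swapcomm_VcA_inj X : inVcA X -> swapcomm X = 0 -> X = 0.
Proof.
by rewrite inVcAE => /span_wedge_antisym; apply: swapcomm_eq0.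
Qed.

Lemma inVcA_comm_part_sum (c : tuple * tuple -> C) :
  inVcA (\sum_(p | anti_pair p) c p *: comm_part p.1 p.2).
Proof.
apply: inspan_sum => p /andP[n2]; rewrite Nset_pcomm => /andP[n1 cp].
by apply: inspanZ; apply: swapcomm_wedge_anti.
Qed.

Lemma swapcomm_anti_sum (c : tuple * tuple -> C) :
  swapcomm (\sum_(p | anti_pair p) c p *: W p.1 p.2) =
  \sum_(p | anti_pair p) c p *: comm_part p.1 p.2 +
  (4%:R / dC) *: wedge 1%:M (\sum_(p | anti_pair p) c p *: (P p.1 *m P p.2)).
Proof.
rewrite swapcomm_sum wedge_sumr scaler_sumr -big_split; apply: eq_bigr => p _ /=.
rewrite swapcommZ wedgeZr /comm_part; move: (swapcomm _) (wedge 1%:M _) => x e.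
by rewrite scalerBr !scalerA mulrC subrK.
Qed.

Lemma perp_anti_products_eq0 (c : tuple * tuple -> C) :
  (forall Z, inVadj Z -> hs Z (\sum_(p | anti_pair p) c p *: W p.1 p.2) = 0) ->
  \sum_(p | anti_pair p) c p *: (P p.1 *m P p.2) = 0.
Proof.
move=> perp; apply: (scalerI dC_neq0); rewrite scaler0 pauli_coord big1 // => t _.
suff -> : \tr (P t *m \sum_(p | anti_pair p) c p *: (P p.1 *m P p.2)) = 0.
  by rewrite scale0r.
have [nt|/nonidPn ->] := boolP (nonid t); last first.
  rewrite pauli_id mul1mx linear_sum big1 // => p /andP[_].
  rewrite Nset_pcomm => /andP[_ cp]; rewrite linearZ /= mxtrace_pauli_mul ?mulr0 //.
  by apply: contraNneq cp => ->; apply: pcommxx.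
have [k k0 hk] := hs_adjgen (\sum_(p | anti_pair p) c p *: W p.1 p.2) nt.
move: (perp _ (@inspan_gen _ _ _ _ _ t nt)).
rewrite hk swapcomm_anti_sum mulmxDr linearD /=.
have := inVcA_comm_part_sum c; rewrite inVcAE => /(mxtrace_wedge1_span t comm_pair_nonid).
move=> ->; rewrite add0r -scalemxAr linearZ /= mxtrace_wedge1 // => /eqP.
rewrite !mulf_eq0 conjc_eq0 (negbTE k0) invr_eq0 !pnatr_eq0 expn_eq0 /=.
by move/eqP.
Qed.

Lemma swapcomm_perp_VcA Y : inVperp Y -> exists2 X, inVcA X & swapcomm X = Y.
Proof.
rewrite /inVperp inVAE => -[hY perp]; have YY := span_wedge_antisym hY.
case/inspanP: hY => c Ye; rewrite Ye in perp.
exists (4%:R^-1 *: swapcomm Y); last by rewrite swapcommZ swapcommK // scalerK ?four_neq0.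
rewrite Ye swapcomm_anti_sum (perp_anti_products_eq0 perp) linear0 scaler0 addr0.
exact/inspanZ/inVcA_comm_part_sum.
Qed.

End SwapCommutator.

Theorem lemma6 (R : rcfType) (q : nat) (hq : (1 <= q)%N) :
  exists f : 'M[R[i]]_(2 ^ q * 2 ^ q) -> 'M[R[i]]_(2 ^ q * 2 ^ q),
    (forall (a : R[i]) X Y, f (a *: X + Y) = a *: f X + f Y) /\
    (forall X, inVcA X -> inVperp (f X)) /\
    (forall X, inVcA X -> f X = 0 -> X = 0) /\
    (forall Y, inVperp Y -> exists2 X, inVcA X & f X = Y) /\
    (forall U, clifford U -> forall X, inVcA X -> f (phi2 U X) = phi2 U (f X)).
Proof.
(* Equivariance holds for every U. *)
exists (@swapcomm R q); split; first exact: linearP.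
split; first exact: swapcomm_VcA_perp.
split; first exact: swapcomm_VcA_inj.
split; first exact: swapcomm_perp_VcA.
by move=> U _ X _; apply: swapcomm_phi2.
Qed.
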